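(* The set $\mathcal S\subseteq\mathcal G$ of multiplication tables $G$ such that $\overline G$ is simple is comeager in $\mathcal G$.
   Context: Let $\mathbb N=\{1,2,3,\dots\}$. Equip $\mathbb N^{\mathbb N\times\mathbb N}$ with the product topology of the discrete topology on $\mathbb N$. Let $\mathcal G$ be the subspace consisting of those $A\in\mathbb N^{\mathbb N\times\mathbb N}$ that are the multiplication table of a group on the underlying set $\mathbb N$ whose identity element is $1$. For $G\in\mathcal G$, $\overline G$ denotes the group on $\mathbb N$ with multiplication table $G$. *)

(* N = {1,2,3,...} is modelled by Stdlib's [positive],
   whose least element is [xH] = 1%positive. *)
From Stdlib Require Import PArith List.
Import ListNotations.

Definition table := positive -> positive -> positive.

Definition is_group_table (A : table) : Prop :=
  (forall x y z, A (A x y) z = A x (A y z)) /\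
  (forall x, A 1%positive x = x /\ A x 1%positive = x) /\
  (forall x, exists y, A x y = 1%positive /\ A y x = 1%positive).

Definition normal_subgroup (A : table) (H : positive -> Prop) : Prop :=
  H 1%positive /\
  (forall x y, H x -> H y -> H (A x y)) /\
  (forall x y, H x -> A x y = 1%positive -> H y) /\
  (forall x g ginv, H x -> A g ginv = 1%positive -> H (A (A g x) ginv)).

Definition simple_table (A : table) : Prop :=
  (exists x, x <> 1%positive) /\
  forall H, normal_subgroup A H ->
    (forall x, H x -> x = 1%positive) \/ (forall x, H x).

(* Product topology of the discrete topology: basic open sets are given by
   prescribing the values on a finite set F of coordinates. *)
Definition agree_on (F : list (positive * positive)) (A B : table) : Prop :=
  forall p, In p F -> A (fst p) (snd p) = B (fst p) (snd p).

Definition open_in_G (U : table -> Prop) : Prop :=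
  forall A, U A ->
    is_group_table A /\
    exists F, forall B, is_group_table B -> agree_on F A B -> U B.

Definition dense_in_G (D : table -> Prop) : Prop :=
  forall A F, is_group_table A -> exists B, is_group_table B /\ D B /\ agree_on F A B.

Definition comeager_in_G (S : table -> Prop) : Prop :=
  exists D : nat -> table -> Prop,
    (forall n, open_in_G (D n) /\ dense_in_G (D n)) /\
    forall A, is_group_table A -> (forall n, D n A) -> S A.

From Stdlib Require Import PArith ZArith Arith List Lia FinFun.
From Stdlib Require Import Classical ConstructiveEpsilon ClassicalEpsilon FunctionalExtensionality.
From Stdlib Require Cantor.
Import ListNotations.

(* For x <> 1 and any y, call a table good if y is a product of conjugates of
   x and x^-1 in it.  A witness of this reads only finitely many entries, so the
   good tables form an open set, and a group table that is good for all pairs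
   (x, y) is simple.  It remains to extend every finite part of a group table A
   to a good group table.

   Let A act by left multiplication on the first coordinate of N x N x Z, and
   let K be the permutation group generated by this action and by [step] (adding
   1 to the Z-coordinate where the first coordinate is 1), [flip] (negating it
   there), an involution [swap_point] exchanging the set S of points with first
   coordinate 1 or x with its complement (the middle coordinate makes S
   infinite), and [twist] : (b, j, n) |-> (y^n b, j, n).  The commutator of left
   multiplication by x with [step], conjugated by [flip], is the unit shift of
   the Z-coordinate on S; times its conjugate by [swap_point] it is the unit
   shift everywhere, and the commutator of [twist] with that shift is left
   multiplication by y.  As K is countably infinite, it can be relabelled by N
   so that left multiplication by a gets the label a for the finitely many a
   concerned, and the group law of K transported along the labels is the
   required table. *)

(** * Normal closures in group tables *)

Inductive conj_product (B : table) (x xinv : positive) : positive -> Prop :=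
| conj_product_1 : conj_product B x xinv 1%positive
| conj_product_cons g ginv (e : bool) z :
    B g ginv = 1%positive -> conj_product B x xinv z ->
    conj_product B x xinv (B (B (B g (if e then x else xinv)) ginv) z).

Definition in_normal_closure (B : table) (x y : positive) : Prop :=
  exists xinv, B x xinv = 1%positive /\ conj_product B x xinv y.

Lemma conj_product_local B x xinv z :
  conj_product B x xinv z ->
  exists F, forall B', agree_on F B B' -> conj_product B' x xinv z.
Proof.
  induction 1 as [|g ginv e z Hg _ [F HF]].
  - exists []. constructor.
  - set (xe := if e then x else xinv).
    exists ((g, ginv) :: (g, xe) :: (B g xe, ginv) :: (B (B g xe) ginv, z) :: F).
    intros B' Hag.
    assert (Hpt : forall a b, In (a, b) ((g, ginv) :: (g, xe) :: (B g xe, ginv)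
                                         :: (B (B g xe) ginv, z) :: F) -> B a b = B' a b)
      by (intros a b Hab; exact (Hag (a, b) Hab)).
    rewrite (Hpt (B (B g xe) ginv) z), (Hpt (B g xe) ginv), (Hpt g xe) by (simpl; tauto).
    constructor.
    + rewrite <- Hpt by (simpl; tauto). exact Hg.
    + apply HF. intros p Hp. apply Hag. simpl; tauto.
Qed.

Lemma in_normal_closure_local B x y :
  in_normal_closure B x y ->
  exists F, forall B', agree_on F B B' -> in_normal_closure B' x y.
Proof.
  intros [xinv [Hxinv Hy]]. destruct (conj_product_local B x xinv y Hy) as [F HF].
  exists ((x, xinv) :: F). intros B' Hag. exists xinv. split.
  - rewrite <- Hxinv. symmetry. exact (Hag (x, xinv) (or_introl eq_refl)).
  - apply HF. intros p Hp. apply Hag. right; exact Hp.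
Qed.

Lemma normal_subgroup_in_normal_closure B H x y :
  normal_subgroup B H -> H x -> in_normal_closure B x y -> H y.
Proof.
  intros (H1 & Hmul & Hinv & Hconj) Hx [xinv [Hxinv Hy]].
  assert (Hxinv' : H xinv) by (apply (Hinv x); assumption).
  induction Hy as [|g ginv e z Hg _ IH]; [exact H1|].
  apply Hmul; [apply (Hconj _ _ _) |]; [destruct e|..]; assumption.
Qed.

Lemma simple_table_of_normal_closure B :
  (forall x y, x <> 1%positive -> in_normal_closure B x y) -> simple_table B.
Proof.
  intros Hncl. split; [exists 2%positive; discriminate|].
  intros H HH. destruct (classic (exists x, H x /\ x <> 1%positive)) as [[x [Hx Hx1]]|Htriv].
  - right. intro y. exact (normal_subgroup_in_normal_closure B H x y HH Hx (Hncl x y Hx1)).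
  - left. intros x Hx. apply NNPP. intro Hx1. apply Htriv. exists x. split; assumption.
Qed.

Definition normal_closure_set (x y : positive) (B : table) : Prop :=
  is_group_table B /\ (x = 1%positive \/ in_normal_closure B x y).

Lemma open_normal_closure_set x y : open_in_G (normal_closure_set x y).
Proof.
  intros B [HB [Hx1 | Hncl]]; split; [exact HB| |exact HB|].
  - exists []. intros B' HB' _. split; [exact HB'|left; exact Hx1].
  - destruct (in_normal_closure_local B x y Hncl) as [F HF].
    exists F. intros B' HB' Hag. split; [exact HB'|right; exact (HF B' Hag)].
Qed.

(** * Countably infinite sets *)

Definition infinite {T} (P : T -> Prop) : Prop :=
  exists f : nat -> T, (forall n, P (f n)) /\ (forall n m, f n = f m -> n = m).

Definition bijection_onto {A T} (P : T -> Prop) (e : A -> T) (r : T -> A) : Prop :=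
  (forall a, P (e a)) /\ (forall a, r (e a) = a) /\ (forall t, P t -> e (r t) = t).

Lemma injective_unbounded (h : nat -> nat) :
  (forall a b, h a = h b -> a = b) -> forall m, exists k, m <= h k.
Proof.
  intros Hinj m. apply NNPP. intro Hnone.
  assert (Hlt : forall k, h k < m).
  { intro k. destruct (Nat.lt_ge_cases (h k) m) as [Hk|Hk]; [exact Hk|].
    destruct (Hnone (ex_intro _ k Hk)). }
  assert (Hnodup : NoDup (map h (seq 0 (S m))))
    by (apply Injective_map_NoDup; [intros a b; apply Hinj | apply seq_NoDup]).
  assert (Hincl : incl (map h (seq 0 (S m))) (seq 0 m)).
  { intros z Hz. apply in_map_iff in Hz. destruct Hz as [k [<- _]].
    apply in_seq. specialize (Hlt k). lia. }
  pose proof (NoDup_incl_length Hnodup Hincl) as Hlen.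
  rewrite length_map, !length_seq in Hlen. lia.
Qed.

Section IncreasingEnumeration.
Variable Q : nat -> Prop.
Hypothesis Q_unbounded : forall m, exists n, m <= n /\ Q n.

Definition next_in (m : nat) : nat :=
  proj1_sig (epsilon_smallest (fun q => m <= q /\ Q q)
               (fun q => excluded_middle_informative _) (Q_unbounded m)).

Lemma next_in_spec m :
  (m <= next_in m /\ Q (next_in m)) /\ forall q, m <= q /\ Q q -> next_in m <= q.
Proof. unfold next_in. destruct (epsilon_smallest _ _ _) as [q Hq]. exact Hq. Qed.

Fixpoint enum_in (n : nat) : nat :=
  match n with
  | O => next_in 0
  | S k => next_in (S (enum_in k))
  end.

Lemma enum_in_Q n : Q (enum_in n).
Proof. destruct n; apply next_in_spec. Qed.

Lemma enum_in_lt_succ n : enum_in n < enum_in (S n).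
Proof. apply next_in_spec. Qed.

Lemma enum_in_lt n m : n < m -> enum_in n < enum_in m.
Proof.
  induction 1 as [|m _ IH]; [apply enum_in_lt_succ|].
  pose proof (enum_in_lt_succ m). lia.
Qed.

Lemma enum_in_inj n m : enum_in n = enum_in m -> n = m.
Proof.
  intro E. destruct (Nat.lt_trichotomy n m) as [Hlt|[Heq|Hlt]]; [|exact Heq|];
    apply enum_in_lt in Hlt; lia.
Qed.

Lemma enum_in_ge n : n <= enum_in n.
Proof. induction n; [lia|]. pose proof (enum_in_lt_succ n). lia. Qed.

Lemma enum_in_below q n : Q q -> q < enum_in n -> exists m, enum_in m = q.
Proof.
  intro Hq. induction n as [|n IH]; intro Hlt.
  - exfalso. pose proof (proj2 (next_in_spec 0) q (conj (Nat.le_0_l q) Hq)). simpl in Hlt. lia.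
  - destruct (Nat.lt_trichotomy q (enum_in n)) as [Hlt'|[Heq|Hgt]].
    + exact (IH Hlt').
    + exists n. symmetry. exact Heq.
    + exfalso. pose proof (proj2 (next_in_spec (S (enum_in n))) q (conj Hgt Hq)).
      simpl in Hlt. lia.
Qed.

Lemma enum_in_surj q : Q q -> exists n, enum_in n = q.
Proof.
  intro Hq. apply (enum_in_below q (S q) Hq).
  pose proof (enum_in_ge (S q)). lia.
Qed.

End IncreasingEnumeration.

Lemma bijection_onto_of_enumeration {A T} (a0 : A) (P : T -> Prop) (e : A -> T) :
  (forall a, P (e a)) -> (forall a b, e a = e b -> a = b) ->
  (forall t, P t -> exists a, e a = t) ->
  exists r, bijection_onto P e r.
Proof.
  intros He Hinj Hsurj.
  exists (fun t => epsilon (inhabits a0) (fun a => e a = t)).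
  assert (Hr : forall t, P t -> e (epsilon (inhabits a0) (fun a => e a = t)) = t)
    by (intros t Ht; apply epsilon_spec, Hsurj, Ht).
  split; [exact He|split; [|exact Hr]].
  intro a. apply Hinj, Hr, He.
Qed.

Lemma countable_infinite_bijection {T} (P : T -> Prop) (code : T -> nat) :
  (forall s t, P s -> P t -> code s = code t -> s = t) -> infinite P ->
  exists (e : nat -> T) r, bijection_onto P e r.
Proof.
  intros Hcode [f [Hf Hfinj]].
  set (Q := fun n => exists t, P t /\ code t = n).
  assert (Q_unbounded : forall m, exists n, m <= n /\ Q n).
  { intro m. destruct (injective_unbounded (fun k => code (f k))) with (m := m) as [k Hk].
    - intros a b E. apply Hfinj, Hcode; auto.
    - exists (code (f k)). split; [exact Hk|exists (f k); auto]. }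
  set (decode := fun n => epsilon (inhabits (f 0)) (fun t => P t /\ code t = n)).
  assert (Hdecode : forall n, Q n -> P (decode n) /\ code (decode n) = n)
    by (intros n Hn; apply epsilon_spec, Hn).
  set (e := fun n => decode (enum_in Q Q_unbounded n)).
  assert (He : forall n, P (e n) /\ code (e n) = enum_in Q Q_unbounded n)
    by (intro n; apply Hdecode, enum_in_Q).
  exists e. apply (bijection_onto_of_enumeration 0); [apply He| |].
  - intros n m E. apply (enum_in_inj Q Q_unbounded).
    rewrite <- (proj2 (He n)), <- (proj2 (He m)), E. reflexivity.
  - intros t Ht. destruct (enum_in_surj Q Q_unbounded (code t)) as [n Hn]; [exists t; auto|].
    exists n. apply Hcode; [apply He|exact Ht|]. rewrite (proj2 (He n)). exact Hn.
Qed.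

Lemma countable_infinite_bijection_positive {T} (P : T -> Prop) (code : T -> nat) :
  (forall s t, P s -> P t -> code s = code t -> s = t) -> infinite P ->
  exists (e : positive -> T) r, bijection_onto P e r.
Proof.
  intros Hcode Hinf.
  destruct (countable_infinite_bijection P code Hcode Hinf) as [e [r (He & Hre & Her)]].
  exists (fun p => e (pred (Pos.to_nat p))), (fun t => Pos.of_succ_nat (r t)).
  split; [|split].
  - intro p. apply He.
  - intro p. rewrite Hre. apply SuccNat2Pos.inv. lia.
  - intros t Ht. rewrite SuccNat2Pos.pred_id. apply Her, Ht.
Qed.

Lemma bijection_onto_involution {A T} (P : T -> Prop) (e : A -> T) r (s : A -> A) :
  bijection_onto P e r -> (forall a, s (s a) = a) ->
  bijection_onto P (fun a => e (s a)) (fun t => s (r t)).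
Proof.
  intros (He & Hre & Her) Hs. split; [|split].
  - intro a. apply He.
  - intro a. rewrite Hre. apply Hs.
  - intros t Ht. rewrite Hs. apply Her, Ht.
Qed.

Definition transpose (u a z : positive) : positive :=
  if Pos.eqb z u then a else if Pos.eqb z a then u else z.

Lemma transpose_involutive u a z : transpose u a (transpose u a z) = z.
Proof.
  unfold transpose.
  destruct (Pos.eqb_spec z u), (Pos.eqb_spec z a);
    repeat match goal with |- context [Pos.eqb ?p ?q] => destruct (Pos.eqb_spec p q) end;
    congruence.
Qed.

Lemma bijection_onto_prescribe {T} (P : T -> Prop) (e : positive -> T) r (lam : positive -> T) :
  bijection_onto P e r -> (forall a, P (lam a)) -> (forall a b, lam a = lam b -> a = b) ->
  forall l, exists e' r', bijection_onto P e' r' /\ forall a, In a l -> r' (lam a) = a.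
Proof.
  intros Hbij Hlam Hlam_inj. induction l as [|a l IH].
  - exists e, r. split; [exact Hbij|intros a []].
  - destruct IH as [e1 [r1 [Hbij1 Hl]]].
    set (u := r1 (lam a)).
    exists (fun p => e1 (transpose u a p)), (fun t => transpose u a (r1 t)).
    split; [exact (bijection_onto_involution P e1 r1 _ Hbij1 (transpose_involutive u a))|].
    destruct Hbij1 as (_ & _ & Her1).
    intros b [<-|Hb]; unfold transpose; [rewrite Pos.eqb_refl; reflexivity|].
    rewrite (Hl b Hb).
    destruct (Pos.eqb_spec b u) as [Ebu|Ebu].
    + apply Hlam_inj. rewrite <- (Her1 (lam a)), <- (Her1 (lam b)) by apply Hlam.
      rewrite (Hl b Hb). fold u. rewrite Ebu. reflexivity.
    + destruct (Pos.eqb_spec b a) as [Eba|]; [|reflexivity].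
      subst b. exfalso. apply Ebu. unfold u. rewrite (Hl a Hb). reflexivity.
Qed.

Lemma partition_swap {I} (code : I -> nat) (S : I -> bool) :
  (forall i j, code i = code j -> i = j) ->
  infinite (fun i => S i = true) -> infinite (fun i => S i = false) ->
  exists s : I -> I, (forall i, s (s i) = i) /\ (forall i, S (s i) = negb (S i)).
Proof.
  intros Hcode Hin Hout.
  destruct (countable_infinite_bijection _ code (fun i j _ _ => Hcode i j) Hin)
    as [e1 [r1 (He1 & Hre1 & Her1)]].
  destruct (countable_infinite_bijection _ code (fun i j _ _ => Hcode i j) Hout)
    as [e2 [r2 (He2 & Hre2 & Her2)]].
  exists (fun i => if S i then e2 (r1 i) else e1 (r2 i)). split.
  - intro i. destruct (S i) eqn:Ei.
    + rewrite He2, Hre2. apply Her1, Ei.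
    + rewrite He1, Hre1. apply Her2, Ei.
  - intro i. destruct (S i); [apply He2|apply He1].
Qed.

(** * Groups generated by a family of permutations *)

Fixpoint encode_list (l : list nat) : nat :=
  match l with
  | [] => 0
  | n :: l' => S (Cantor.to_nat (n, encode_list l'))
  end.

Lemma encode_list_inj l l' : encode_list l = encode_list l' -> l = l'.
Proof.
  revert l'. induction l as [|n l IH]; intros [|n' l'] E; try discriminate; [reflexivity|].
  cbn [encode_list] in E. apply Nat.succ_inj, Cantor.to_nat_inj in E. injection E as -> E.
  rewrite (IH l' E). reflexivity.
Qed.

Section GeneratedGroup.
Variables (X G : Type) (gen gen_inv : G -> X -> X) (gen_code : G -> nat).
Hypothesis gen_code_inj : forall a b, gen_code a = gen_code b -> a = b.
Hypothesis gen_inv_gen : forall a p, gen_inv a (gen a p) = p.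
Hypothesis gen_gen_inv : forall a p, gen a (gen_inv a p) = p.

Definition letter (l : G * bool) : X -> X := if snd l then gen (fst l) else gen_inv (fst l).

Definition eval_word (w : list (G * bool)) : X -> X :=
  fold_right (fun l f p => letter l (f p)) (fun p => p) w.

Definition generated (f : X -> X) : Prop := exists w, eval_word w = f.

Lemma eval_word_app w w' p : eval_word (w ++ w') p = eval_word w (eval_word w' p).
Proof. induction w as [|l w IH]; simpl; [reflexivity|]. rewrite IH. reflexivity. Qed.

Lemma generated_id : generated (fun p => p).
Proof. exists []. reflexivity. Qed.

Lemma generated_comp u v : generated u -> generated v -> generated (fun p => u (v p)).
Proof.
  intros [w <-] [w' <-]. exists (w ++ w').
  apply functional_extensionality. intro p. apply eval_word_app.
Qed.

Lemma generated_gen a : generated (gen a).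
Proof. exists [(a, true)]. reflexivity. Qed.

Lemma generated_gen_inv a : generated (gen_inv a).
Proof. exists [(a, false)]. reflexivity. Qed.

Definition inverse_word (w : list (G * bool)) : list (G * bool) :=
  rev (map (fun l => (fst l, negb (snd l))) w).

Lemma eval_inverse_word w p : eval_word (inverse_word w) (eval_word w p) = p.
Proof.
  induction w as [|[a b] w IH]; [reflexivity|].
  unfold inverse_word in *. simpl. rewrite eval_word_app. simpl.
  destruct b; unfold letter; simpl; rewrite ?gen_inv_gen, ?gen_gen_inv; apply IH.
Qed.

Lemma inverse_word_involutive w : inverse_word (inverse_word w) = w.
Proof.
  unfold inverse_word. rewrite map_rev, rev_involutive, map_map.
  rewrite <- (map_id w) at 2. apply map_ext. intros [a b]. simpl. rewrite Bool.negb_involutive.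
  reflexivity.
Qed.

Lemma generated_inverse f : generated f ->
  exists f', generated f' /\ (forall p, f (f' p) = p) /\ (forall p, f' (f p) = p).
Proof.
  intros [w <-]. exists (eval_word (inverse_word w)). split; [eexists; reflexivity|split].
  - intro p. rewrite <- (inverse_word_involutive w) at 1. apply eval_inverse_word.
  - apply eval_inverse_word.
Qed.

Definition letter_code (l : G * bool) : nat := Cantor.to_nat (gen_code (fst l), Nat.b2n (snd l)).

Lemma letter_code_inj l l' : letter_code l = letter_code l' -> l = l'.
Proof.
  destruct l as [a b], l' as [a' b']. unfold letter_code. cbn [fst snd].
  intro E. apply Cantor.to_nat_inj in E. injection E as Ea Eb.
  rewrite (gen_code_inj a a' Ea). destruct b, b'; try discriminate; reflexivity.
Qed.

Definition encode_word (w : list (G * bool)) : nat := encode_list (map letter_code w).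

Lemma encode_word_inj w w' : encode_word w = encode_word w' -> w = w'.
Proof.
  intro E. apply encode_list_inj in E. revert w' E.
  induction w as [|l w IH]; intros [|l' w'] E; try discriminate; [reflexivity|].
  injection E as El Ew. rewrite (letter_code_inj l l' El), (IH w' Ew). reflexivity.
Qed.

Definition generated_code (f : X -> X) : nat :=
  encode_word (epsilon (inhabits []) (fun w => eval_word w = f)).

Lemma generated_code_inj f f' :
  generated f -> generated f' -> generated_code f = generated_code f' -> f = f'.
Proof.
  intros Hf Hf' E. apply encode_word_inj in E.
  rewrite <- (epsilon_spec (inhabits []) (fun w => eval_word w = f) Hf),
          <- (epsilon_spec (inhabits []) (fun w => eval_word w = f') Hf'), E.
  reflexivity.
Qed.

End GeneratedGroup.

Section ConjugateProducts.
Variables (X : Type) (K : (X -> X) -> Prop) (s sinv : X -> X).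

Inductive perm_conj_product : (X -> X) -> Prop :=
| perm_conj_product_id : perm_conj_product (fun p => p)
| perm_conj_product_cons h hinv (e : bool) z :
    K h -> K hinv -> (forall p, h (hinv p) = p) -> (forall p, hinv (h p) = p) ->
    perm_conj_product z -> perm_conj_product (fun p => h ((if e then s else sinv) (hinv (z p)))).

Hypothesis K_id : K (fun p => p).
Hypothesis K_comp : forall u v, K u -> K v -> K (fun p => u (v p)).
Hypothesis s_sinv : forall p, s (sinv p) = p.
Hypothesis sinv_s : forall p, sinv (s p) = p.

Lemma perm_conj_product_gen (e : bool) : perm_conj_product (if e then s else sinv).
Proof.
  exact (perm_conj_product_cons (fun q => q) (fun q => q) e (fun q => q) K_id K_id
           (fun _ => eq_refl) (fun _ => eq_refl) perm_conj_product_id).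
Qed.

Lemma perm_conj_product_comp z z' :
  perm_conj_product z -> perm_conj_product z' -> perm_conj_product (fun p => z (z' p)).
Proof.
  intros Hz Hz'. induction Hz as [|h hinv e z Kh Khinv E1 E2 _ IH]; [exact Hz'|].
  exact (perm_conj_product_cons h hinv e (fun p => z (z' p)) Kh Khinv E1 E2 IH).
Qed.

Lemma perm_conj_product_conj z h hinv :
  perm_conj_product z -> K h -> K hinv ->
  (forall p, h (hinv p) = p) -> (forall p, hinv (h p) = p) ->
  perm_conj_product (fun p => h (z (hinv p))).
Proof.
  intros Hz Kh Khinv E1 E2. induction Hz as [|k kinv e z Kk Kkinv F1 F2 _ IH].
  - replace (fun p => h (hinv p)) with (fun p : X => p)
      by (apply functional_extensionality; intro; symmetry; apply E1).
    exact perm_conj_product_id.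
  - (* h (k s^e kinv z) hinv = (h k) s^e (kinv hinv) (h z hinv) *)
    replace (fun p => h (k ((if e then s else sinv) (kinv (z (hinv p))))))
      with (fun p => h (k ((if e then s else sinv) (kinv (hinv (h (z (hinv p))))))))
      by (apply functional_extensionality; intro; rewrite E2; reflexivity).
    apply (perm_conj_product_cons (fun q => h (k q)) (fun q => kinv (hinv q)) e); auto.
    + intro p. rewrite F1, E1. reflexivity.
    + intro p. rewrite E2, F2. reflexivity.
Qed.

Lemma perm_conj_product_inverse z :
  perm_conj_product z ->
  exists z', perm_conj_product z' /\ (forall p, z (z' p) = p) /\ (forall p, z' (z p) = p).
Proof.
  induction 1 as [|h hinv e z Kh Khinv E1 E2 _ [z' (Hz' & F1 & F2)]].
  - exists (fun p => p). split; [exact perm_conj_product_id|split; reflexivity].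
  - exists (fun p => z' (h ((if negb e then s else sinv) (hinv p)))). split; [|split].
    + apply perm_conj_product_comp; [exact Hz'|].
      exact (perm_conj_product_cons h hinv (negb e) _ Kh Khinv E1 E2 perm_conj_product_id).
    + intro p. rewrite F1, E2. destruct e; simpl; rewrite ?s_sinv, ?sinv_s; apply E1.
    + intro p. rewrite E2. destruct e; simpl; rewrite ?s_sinv, ?sinv_s, E1; apply F2.
Qed.

Lemma perm_conj_product_left_inverse z zinv :
  perm_conj_product z -> (forall p, zinv (z p) = p) -> perm_conj_product zinv.
Proof.
  intros Hz Hzinv. destruct (perm_conj_product_inverse z Hz) as [z' (Hz' & F1 & _)].
  replace zinv with z'; [exact Hz'|].
  apply functional_extensionality. intro p. rewrite <- (F1 p) at 2. symmetry. apply Hzinv.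
Qed.

Lemma perm_conj_product_in_K z : K s -> K sinv -> perm_conj_product z -> K z.
Proof.
  intros Ks Ksinv. induction 1 as [|h hinv e z Kh Khinv _ _ _ IH]; [exact K_id|].
  apply K_comp; [exact Kh|]. apply (K_comp (if e then s else sinv)); [destruct e; assumption|].
  apply K_comp; assumption.
Qed.

End ConjugateProducts.

Section TransportedTable.
Variables (X : Type) (K : (X -> X) -> Prop).
Hypothesis K_id : K (fun p => p).
Hypothesis K_comp : forall u v, K u -> K v -> K (fun p => u (v p)).
Hypothesis K_inverse : forall u, K u ->
  exists u', K u' /\ (forall p, u (u' p) = p) /\ (forall p, u' (u p) = p).
Variables (of_label : positive -> X -> X) (label : (X -> X) -> positive).
Hypothesis label_bij : bijection_onto K of_label label.
Hypothesis label_id : label (fun p => p) = 1%positive.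

Definition transported_table : table := fun a b => label (fun p => of_label a (of_label b p)).

Lemma transported_table_label u v :
  K u -> K v -> transported_table (label u) (label v) = label (fun p => u (v p)).
Proof.
  destruct label_bij as (_ & _ & Hof_label). intros Ku Kv.
  unfold transported_table. rewrite (Hof_label u Ku), (Hof_label v Kv). reflexivity.
Qed.

Lemma transported_group_table : is_group_table transported_table.
Proof.
  destruct label_bij as (Kof_label & Hlabel_of & Hof_label).
  assert (Inv1 : of_label 1%positive = fun p => p) by (rewrite <- label_id; apply Hof_label, K_id).
  split; [|split].
  - intros a b c. rewrite <- (Hlabel_of a), <- (Hlabel_of b), <- (Hlabel_of c).
    rewrite !transported_table_label; auto.
  - intro a. unfold transported_table. rewrite Inv1. split; apply Hlabel_of.
  - intro a. destruct (K_inverse (of_label a) (Kof_label a)) as [u' (Ku' & E1 & E2)].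
    exists (label u'). rewrite <- (Hlabel_of a). rewrite !transported_table_label by auto.
    rewrite <- label_id. split; f_equal; apply functional_extensionality; assumption.
Qed.

Lemma transported_conj_product s sinv z :
  K s -> K sinv -> perm_conj_product X K s sinv z ->
  conj_product transported_table (label s) (label sinv) (label z).
Proof.
  intros Ks Ksinv. induction 1 as [|h hinv e z Kh Khinv E1 _ Hz IH].
  - rewrite label_id. apply conj_product_1.
  - assert (Kz : K z) by (apply (perm_conj_product_in_K X K s sinv); assumption).
    set (xe := if e then s else sinv).
    assert (Kxe : K xe) by (destruct e; assumption).
    replace (label (fun p => h (xe (hinv (z p)))))
      with (transported_table
              (transported_table (transported_table (label h) (label xe)) (label hinv)) (label z))
      by (rewrite !transported_table_label by auto; reflexivity).
    replace (label xe) with (if e then label s else label sinv) by (destruct e; reflexivity).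
    apply conj_product_cons; [|exact IH].
    rewrite transported_table_label, <- label_id by auto. f_equal.
    apply functional_extensionality. exact E1.
Qed.

End TransportedTable.
(** * A permutation group in which [y] lies in the normal closure of [x] *)

Local Open Scope positive_scope.

Section LeftRegularAction.
Variable A : table.
Hypothesis HA : is_group_table A.

Definition invA (a : positive) : positive :=
  proj1_sig (constructive_indefinite_description _ (proj2 (proj2 HA) a)).

Lemma A_assoc a b c : A (A a b) c = A a (A b c).
Proof. apply (proj1 HA). Qed.

Lemma A_1l a : A 1 a = a.
Proof. apply (proj1 (proj2 HA)). Qed.

Lemma A_1r a : A a 1 = a.
Proof. apply (proj1 (proj2 HA)). Qed.

Lemma A_invA_r a : A a (invA a) = 1.
Proof. exact (proj1 (proj2_sig (constructive_indefinite_description _ (proj2 (proj2 HA) a)))).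
Qed.

Lemma A_invA_l a : A (invA a) a = 1.
Proof. exact (proj2 (proj2_sig (constructive_indefinite_description _ (proj2 (proj2 HA) a)))).
Qed.

Lemma A_invA_K a b : A (invA a) (A a b) = b.
Proof. rewrite <- A_assoc, A_invA_l. apply A_1l. Qed.

Lemma A_K_invA a b : A a (A (invA a) b) = b.
Proof. rewrite <- A_assoc, A_invA_r. apply A_1l. Qed.

Definition point : Type := (positive * nat * Z)%type.

Definition left_mul (a : positive) (p : point) : point :=
  let '(b, j, n) := p in (A a b, j, n).

Lemma left_mul_1 : left_mul 1 = fun p => p.
Proof. apply functional_extensionality. intros [[b j] n]. simpl. rewrite A_1l. reflexivity. Qed.

Lemma left_mul_mul a b : left_mul (A a b) = fun p => left_mul a (left_mul b p).
Proof. apply functional_extensionality. intros [[c j] n]. simpl. rewrite A_assoc. reflexivity. Qed.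

Lemma left_mul_invA_K a p : left_mul (invA a) (left_mul a p) = p.
Proof. destruct p as [[b j] n]. simpl. rewrite A_invA_K. reflexivity. Qed.

Lemma left_mul_K_invA a p : left_mul a (left_mul (invA a) p) = p.
Proof. destruct p as [[b j] n]. simpl. rewrite A_K_invA. reflexivity. Qed.

Lemma left_mul_inj a b : left_mul a = left_mul b -> a = b.
Proof.
  intro E. apply (f_equal (fun f => f (1, O, 0%Z))) in E. simpl in E.
  rewrite !A_1r in E. congruence.
Qed.

Section Generators.
Variable y : positive.
Variable swap : positive * nat -> positive * nat.
Hypothesis swap_involutive : forall i, swap (swap i) = i.

Definition ypow (n : Z) (b : positive) : positive :=
  match n with
  | Z0 => b
  | Zpos k => Pos.iter (A y) b k
  | Zneg k => Pos.iter (A (invA y)) b k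
  end.

Lemma ypow_succ n b : ypow (n + 1) b = A y (ypow n b).
Proof.
  destruct n as [|k|k]; [reflexivity| |].
  - simpl. rewrite Pos.add_1_r, Pos.iter_succ. reflexivity.
  - destruct (Pos.succ_pred_or k) as [->|Ek]; [simpl; rewrite A_K_invA; reflexivity|].
    rewrite <- Ek. replace (Z.neg (Pos.succ (Pos.pred k)) + 1)%Z with (Z.neg (Pos.pred k)) by lia.
    simpl. rewrite Pos.iter_succ, A_K_invA. reflexivity.
Qed.

Lemma ypow_pred n b : ypow (n - 1) b = A (invA y) (ypow n b).
Proof.
  rewrite <- (A_invA_K y (ypow (n - 1) b)), <- ypow_succ.
  replace (n - 1 + 1)%Z with n by lia. reflexivity.
Qed.

Lemma ypow_add n m b : ypow n (ypow m b) = ypow (n + m) b.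
Proof.
  induction n as [|n IH|n IH] using Z.peano_ind; [reflexivity| |].
  - rewrite <- Z.add_1_r, ypow_succ, IH, <- ypow_succ. f_equal. lia.
  - rewrite <- Z.sub_1_r, ypow_pred, IH, <- ypow_pred. f_equal. lia.
Qed.

Definition shift (p : point) : point := let '(b, j, n) := p in (b, j, (n + 1)%Z).
Definition unshift (p : point) : point := let '(b, j, n) := p in (b, j, (n - 1)%Z).

Definition step (p : point) : point :=
  let '(b, j, n) := p in (b, j, if b =? 1 then (n + 1)%Z else n).
Definition unstep (p : point) : point :=
  let '(b, j, n) := p in (b, j, if b =? 1 then (n - 1)%Z else n).

Definition flip (p : point) : point :=
  let '(b, j, n) := p in (b, j, if b =? 1 then (- n)%Z else n).

Definition twist (p : point) : point := let '(b, j, n) := p in (ypow n b, j, n).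
Definition untwist (p : point) : point := let '(b, j, n) := p in (ypow (- n) b, j, n).

Definition swap_point (p : point) : point := let '(i, n) := p in (swap i, n).

Inductive generator : Type := Step | Flip | Swap | Twist | LeftMul (a : positive).

Definition gen (t : generator) : point -> point :=
  match t with
  | Step => step | Flip => flip | Swap => swap_point | Twist => twist | LeftMul a => left_mul a
  end.

Definition gen_inv (t : generator) : point -> point :=
  match t with
  | Step => unstep | Flip => flip | Swap => swap_point | Twist => untwist
  | LeftMul a => left_mul (invA a)
  end.

Definition generator_code (t : generator) : nat :=
  match t with
  | Step => 0 | Flip => 1 | Swap => 2 | Twist => 3 | LeftMul a => 3 + Pos.to_nat a
  end.

Lemma generator_code_inj t t' : generator_code t = generator_code t' -> t = t'.
Proof.
  destruct t, t'; simpl; intro E; try reflexivity; try lia.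
  f_equal. apply Pos2Nat.inj. lia.
Qed.

Lemma gen_inv_gen t p : gen_inv t (gen t p) = p.
Proof.
  destruct t; [| | | |apply left_mul_invA_K]; destruct p as [[b j] n]; cbn -[Pos.eqb].
  - destruct (b =? 1); f_equal; lia.
  - destruct (b =? 1); f_equal; lia.
  - rewrite swap_involutive. reflexivity.
  - rewrite ypow_add. replace (- n + n)%Z with 0%Z by lia. reflexivity.
Qed.

Lemma gen_gen_inv t p : gen t (gen_inv t p) = p.
Proof.
  destruct t; [| | | |apply left_mul_K_invA]; destruct p as [[b j] n]; cbn -[Pos.eqb].
  - destruct (b =? 1); f_equal; lia.
  - destruct (b =? 1); f_equal; lia.
  - rewrite swap_involutive. reflexivity.
  - rewrite ypow_add. replace (n + - n)%Z with 0%Z by lia. reflexivity.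
Qed.

Definition perm_group : (point -> point) -> Prop := generated point generator gen gen_inv.

Lemma left_mul_y_as_commutator p : twist (shift (untwist (unshift p))) = left_mul y p.
Proof.
  destruct p as [[b j] n]. simpl. rewrite ypow_add.
  replace (n - 1 + 1)%Z with n by lia. replace (n + - (n - 1))%Z with 1%Z by lia. reflexivity.
Qed.

Definition in_support (x : positive) (i : positive * nat) : bool := (fst i =? 1) || (fst i =? x).

Section NormalClosureOfX.
Variable x : positive.
Hypothesis x_neq_1 : x <> 1.
Hypothesis in_support_swap : forall i, in_support x (swap i) = negb (in_support x i).

Definition support_shift (p : point) : point :=
  let '(i, n) := p in (i, if in_support x i then (n + 1)%Z else n).

Definition in_ncl_x : (point -> point) -> Prop :=
  perm_conj_product point perm_group (left_mul x) (left_mul (invA x)).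

Lemma in_ncl_x_conj_gen t z : in_ncl_x z -> in_ncl_x (fun p => gen t (z (gen_inv t p))).
Proof.
  intro Hz.
  apply perm_conj_product_conj;
    [intros u v; apply generated_comp|exact Hz|apply generated_gen|apply generated_gen_inv|..];
    intro p; [apply gen_gen_inv|apply gen_inv_gen].
Qed.

Lemma in_ncl_x_comp z z' : in_ncl_x z -> in_ncl_x z' -> in_ncl_x (fun p => z (z' p)).
Proof. apply perm_conj_product_comp. Qed.

Lemma in_ncl_x_left_mul (e : bool) : in_ncl_x (left_mul (if e then x else invA x)).
Proof.
  replace (left_mul (if e then x else invA x)) with (if e then left_mul x else left_mul (invA x))
    by (destruct e; reflexivity).
  apply perm_conj_product_gen, generated_id.
Qed.

(* [step] conjugated by [left_mul x] acts at [b = x]; the commutator with [step]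
   shifts by [+1] at [b = x] and by [-1] at [b = 1], and [flip] corrects the sign. *)
Lemma support_shift_as_commutator p :
  flip (left_mul x (step (left_mul (invA x) (unstep (flip p))))) = support_shift p.
Proof.
  destruct p as [[b j] n]. cbn -[Pos.eqb]. rewrite A_K_invA. unfold in_support. cbn [fst].
  destruct (Pos.eqb_spec b 1) as [->|Hb1].
  - assert (invA_eqb_1 : (invA x =? 1) = false).
    { apply Pos.eqb_neq. intro E. apply x_neq_1.
      rewrite <- (A_invA_r x), E. symmetry. apply A_1r. }
    rewrite A_1r, invA_eqb_1. simpl. f_equal. lia.
  - destruct (Pos.eqb_spec b x) as [->|Hbx].
    + rewrite A_invA_l. reflexivity.
    + assert (E : (A (invA x) b =? 1) = false).
      { apply Pos.eqb_neq. intro E. apply Hbx. rewrite <- (A_K_invA x b), E. apply A_1r. }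
      rewrite E. reflexivity.
Qed.

(* The supports of [support_shift] and of its conjugate by [swap_point] partition the points. *)
Lemma shift_as_product p : support_shift (swap_point (support_shift (swap_point p))) = shift p.
Proof.
  destruct p as [[b j] n]. cbn -[in_support]. rewrite swap_involutive, in_support_swap.
  destruct (in_support x (b, j)); reflexivity.
Qed.

Lemma in_ncl_x_left_mul_y : in_ncl_x (left_mul y).
Proof.
  assert (Hsupport : in_ncl_x support_shift).
  { replace support_shift
      with (fun p => flip (left_mul x (step (left_mul (invA x) (unstep (flip p))))))
      by (apply functional_extensionality; apply support_shift_as_commutator).
    apply (in_ncl_x_conj_gen Flip (fun p => left_mul x (step (left_mul (invA x) (unstep p))))).
    apply in_ncl_x_comp; [exact (in_ncl_x_left_mul true)|].
    exact (in_ncl_x_conj_gen Step _ (in_ncl_x_left_mul false)). }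
  assert (Hshift : in_ncl_x shift).
  { replace shift with (fun p => support_shift (swap_point (support_shift (swap_point p))))
      by (apply functional_extensionality; apply shift_as_product).
    exact (in_ncl_x_comp _ _ Hsupport (in_ncl_x_conj_gen Swap _ Hsupport)). }
  assert (Hunshift : in_ncl_x unshift).
  { apply (perm_conj_product_left_inverse _ _ _ _ (left_mul_K_invA x) (left_mul_invA_K x) shift);
      [exact Hshift|].
    intros [[b j] n]. simpl. f_equal. lia. }
  replace (left_mul y) with (fun p => twist (shift (untwist (unshift p))))
    by (apply functional_extensionality; apply left_mul_y_as_commutator).
  exact (in_ncl_x_comp _ _ (in_ncl_x_conj_gen Twist _ Hshift) Hunshift).
Qed.

End NormalClosureOfX.

End Generators.

End LeftRegularAction.

(** * Density *)

Definition point_code (i : positive * nat) : nat := Cantor.to_nat (Pos.to_nat (fst i), snd i).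

Lemma point_code_inj i i' : point_code i = point_code i' -> i = i'.
Proof.
  destruct i as [a j], i' as [a' j']. unfold point_code. cbn [fst snd].
  intro E. apply Cantor.to_nat_inj in E. injection E as Ea Ej.
  rewrite (Pos2Nat.inj a a' Ea), Ej. reflexivity.
Qed.

Lemma support_swap_exists x :
  exists swap : positive * nat -> positive * nat,
    (forall i, swap (swap i) = i) /\ (forall i, in_support x (swap i) = negb (in_support x i)).
Proof.
  apply (partition_swap point_code); [exact point_code_inj| |].
  - exists (fun j => (1, j)). split; [reflexivity|]. intros n m E. injection E as E. exact E.
  - exists (fun j => (if x =? 2 then 3 else 2, j)). split.
    + intro j. unfold in_support. cbn [fst].
      destruct (Pos.eqb_spec x 2) as [->|Hx2]; [reflexivity|].
      rewrite (proj2 (Pos.eqb_neq 2 x)) by congruence. reflexivity.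
    + intros n m E. injection E as E. exact E.
Qed.

Lemma finite_extension_with_normal_closure A x y (S : list positive) :
  is_group_table A -> x <> 1 -> In 1 S -> In x S -> In y S ->
  exists B, is_group_table B /\ in_normal_closure B x y /\
    forall a b, In a S -> In b S -> In (A a b) S -> B a b = A a b.
Proof.
  intros HA Hx H1 HxS HyS.
  destruct (support_swap_exists x) as [swap [Hswap Hsupp]].
  set (K := perm_group A HA y swap).
  set (lm := left_mul A).
  assert (K_comp : forall u v, K u -> K v -> K (fun p => u (v p))) by apply generated_comp.
  assert (K_lm : forall a, K (lm a)) by (intro a; exact (generated_gen _ _ _ _ (LeftMul a))).
  assert (lm_inj : forall a b, lm a = lm b -> a = b) by apply left_mul_inj, HA.
  destruct (countable_infinite_bijection_positive K
              (generated_code _ _ (gen A HA y swap) (gen_inv A HA y swap) generator_code))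
    as [of_label0 [label0 Hbij0]].
  { apply generated_code_inj, generator_code_inj. }
  { exists (fun n => lm (Pos.of_succ_nat n)). split; [intro; apply K_lm|].
    intros n m E. apply lm_inj, SuccNat2Pos.inj in E. exact E. }
  destruct (bijection_onto_prescribe K of_label0 label0 lm Hbij0 K_lm lm_inj S)
    as [of_label [label [Hbij Hlabel]]].
  assert (label_id : label (fun p => p) = 1) by (rewrite <- (left_mul_1 A HA); apply Hlabel, H1).
  set (B := transported_table _ of_label label).
  assert (B_lm : forall u v, K u -> K v -> B (label u) (label v) = label (fun p => u (v p)))
    by (apply transported_table_label, Hbij).
  exists B. split; [|split].
  - apply (transported_group_table _ K);
      [apply generated_id|exact K_comp| |exact Hbij|exact label_id].
    apply generated_inverse; [apply gen_inv_gen, Hswap|apply gen_gen_inv, Hswap].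
  - exists (label (lm (invA A HA x))). split.
    + rewrite <- (Hlabel x HxS) at 1. rewrite B_lm, <- label_id by apply K_lm. f_equal.
      apply functional_extensionality, left_mul_K_invA.
    + rewrite <- (Hlabel x HxS) at 1. rewrite <- (Hlabel y HyS).
      apply (transported_conj_product _ K);
        [apply generated_id|exact K_comp|exact Hbij|exact label_id|apply K_lm|apply K_lm|].
      exact (in_ncl_x_left_mul_y A HA y swap Hswap x Hx Hsupp).
  - intros a b Ha Hb Hab. rewrite <- (Hlabel a Ha), <- (Hlabel b Hb) at 1.
    rewrite B_lm by apply K_lm. rewrite <- (left_mul_mul A HA). apply Hlabel, Hab.
Qed.

Lemma dense_normal_closure_set x y : dense_in_G (normal_closure_set x y).
Proof.
  intros A F HA. destruct (Pos.eq_dec x 1) as [Hx1|Hx1].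
  - exists A. split; [exact HA|split; [split; [exact HA|left; exact Hx1]|intros p _; reflexivity]].
  - set (S := 1 :: x :: y :: flat_map (fun p => [fst p; snd p; A (fst p) (snd p)]) F).
    destruct (finite_extension_with_normal_closure A x y S) as [B (HB & Hncl & Hagree)];
      [exact HA|exact Hx1|simpl; tauto|simpl; tauto|simpl; tauto|].
    exists B. split; [exact HB|split; [split; [exact HB|right; exact Hncl]|]].
    intros p Hp. symmetry. apply Hagree; right; right; right; apply in_flat_map; exists p;
      split; simpl; tauto.
Qed.

Definition pair_fst (n : nat) : positive := Pos.of_succ_nat (fst (Cantor.of_nat n)).
Definition pair_snd (n : nat) : positive := Pos.of_succ_nat (snd (Cantor.of_nat n)).

Lemma pair_surj x y : exists n, pair_fst n = x /\ pair_snd n = y.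
Proof.
  exists (Cantor.to_nat (pred (Pos.to_nat x), pred (Pos.to_nat y))).
  unfold pair_fst, pair_snd. rewrite Cantor.cancel_of_to. cbn [fst snd].
  split; apply SuccNat2Pos.inv; lia.
Qed.

Theorem corollary4p6 :
  comeager_in_G (fun A => is_group_table A /\ simple_table A).
Proof.
  exists (fun n => normal_closure_set (pair_fst n) (pair_snd n)). split.
  - intro n. split; [apply open_normal_closure_set|apply dense_normal_closure_set].
  - intros B HB HD. split; [exact HB|]. apply simple_table_of_normal_closure.
    intros x y Hx. destruct (pair_surj x y) as [n [<- <-]].
    destruct (HD n) as [_ [Hx1|Hncl]]; [contradiction|exact Hncl].
Qed.
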